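(* Let $G$ be a finite group, $p$ a prime, $S$ a Sylow $p$-subgroup of $G$, and let $N$ be a subgroup of $G$ of order prime to $p$ which is normalised by $S$. Suppose $\chi$ is a faithful Steinberg-like character of $G$. Then $N$ is abelian and $C_G(S)=Z(G)Z(S)$.
   Context: A character $\chi$ of $G$ is Steinberg-like (with respect to $p$) if $\chi(g)=0$ for every $g\in G$ of order divisible by $p$ and $\chi(1)=|S|$. Faithful means the associated representation has trivial kernel. *)

From HB Require Import structures.
From mathcomp Require Import all_boot all_order all_algebra all_fingroup all_solvable all_field all_character.
Set Implicit Arguments. Unset Strict Implicit. Unset Printing Implicit Defensive.
Import GRing.Theory Num.Theory.
Local Open Scope ring_scope.
Local Open Scope group_scope.

Definition steinberg_like (gT : finGroupType) (G S : {group gT}) (p : nat)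
  (chi : 'CF(G)) : Prop :=
  [/\ chi \is a character,
      (forall g, g \in G -> (p %| #[g])%N -> chi g = 0)
    & chi 1%g = (#|S|)%:R].

From HB Require Import structures.
From mathcomp Require Import all_boot all_order all_algebra all_fingroup all_solvable all_field all_character.

Set Implicit Arguments.
Unset Strict Implicit.
Unset Printing Implicit Defensive.

Import Order.TTheory GRing.Theory Num.Theory.
Local Open Scope group_scope.

(* Let H = N S and let theta be a constituent of chi_N, with inertia group T in H.
   Since chi vanishes on H \ N (these elements have order divisible by p), the
   coprime extension of theta to T has inner product [chi_N, theta] / |T : N|
   with chi_T, so [chi_N, theta] >= |T : N|; Clifford's counting of the
   H-conjugates of theta then gives |S| theta(1) <= chi(1) = |S|.  Hence every
   constituent of chi_N is linear, which makes N' lie in ker chi = 1, and if S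
   fixes theta then chi_N = |S| theta.  For y a p'-element of C_G(S) this applies
   to N = <y>, so |chi(y)| = chi(1) and y lies in Z(chi) = Z(G); the p-part of an
   element of C_G(S) lies in S, hence in Z(S). *)

Section CharacterFacts.

Local Open Scope ring_scope.

Lemma natC_ge1 (x : algC) : x \is a Num.nat -> x != 0 -> 1 <= x.
Proof. by move=> /natrP[n ->]; rewrite pnatr_eq0 ler1n lt0n. Qed.

Variable gT : finGroupType.

Lemma cfcenter_fful_sub (G : {group gT}) (chi : 'CF(G)) :
  cfaithful chi -> 'Z(chi)%CF \subset 'Z(G).
Proof.
move=> ffchi; rewrite subsetI cfcenter_sub /=.
have := cfcenter_subset_center chi; rewrite subsetI => /andP[_].
have nKG := normal_norm (cfker_normal chi).
have nKZ := subset_trans (cfcenter_sub chi) nKG.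
rewrite quotient_cents2 // => sRK.
by apply/commG1P/trivgP; apply: subset_trans sRK ffchi.
Qed.

Lemma der1_sub_cfker_lin_constt (N : {group gT}) (psi : 'CF(N)) :
  psi \is a character ->
  {in irr_constt psi, forall t, 'chi_t \is a linear_char} ->
  (N^`(1))%g \subset cfker psi.
Proof.
move=> Npsi lin_psi; rewrite (cfkerE Npsi) subsetI der_sub.
by apply/bigcapsP => t /lin_psi /lin_char_der1.
Qed.

Lemma cfdot_Res_on (T N : {group gT}) (psi phi : 'CF(T)) :
  N \subset T -> psi \in 'CF(T, N) ->
  '['Res[N] psi, 'Res[N] phi] = #|T : N|%:R * '[psi, phi].
Proof.
move=> sNT /cfun_onP psiN; rewrite !cfdotE [in RHS](big_setID N) /= (setIidPr sNT).
rewrite [X in _ + X]big1 ?addr0 => [|x /setDP[_ /psiN->]]; last by rewrite mul0r.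
rewrite mulrA; have -> : #|T : N|%:R * #|T|%:R^-1 = #|N|%:R^-1 :> algC.
  rewrite -(Lagrange sNT) natrM invfM mulrCA divff ?mulr1 //.
  by rewrite pnatr_eq0 -lt0n indexg_gt0.
by congr (_ * _); apply: eq_bigr => x Nx; rewrite !cfResE.
Qed.

Lemma index_le_cfdot_Res_extension (T N : {group gT}) (psi : 'CF(T))
    (c : Iirr T) (t : Iirr N) :
  N \subset T -> psi \is a character -> psi \in 'CF(T, N) ->
  'Res[N] 'chi_c = 'chi_t -> t \in irr_constt ('Res[N] psi) ->
  #|T : N|%:R <= '['Res[N] psi, 'chi_t].
Proof.
move=> sNT Npsi psiN extc; rewrite irr_consttE -extc cfdot_Res_on //.
rewrite mulf_eq0 negb_or => /andP[_ nz_c].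
have natC := Cnat_cfdot_char Npsi (irr_char c).
by rewrite -{1}[_%:R]mulr1 ler_wpM2l ?ler0n ?natC_ge1.
Qed.

Lemma cfun1_sum_cfdot (N : {group gT}) (psi : 'CF(N)) :
  psi 1%g = \sum_i '[psi, 'chi_i] * 'chi_i 1%g.
Proof.
by rewrite {1}(cfun_sum_cfdot psi) sum_cfunE; apply: eq_bigr => i _; rewrite cfunE.
Qed.

Lemma cfdot_irr1_ge0 (N : {group gT}) (psi : 'CF(N)) (i : Iirr N) :
  psi \is a character -> 0 <= '[psi, 'chi_i] * 'chi_i 1%g.
Proof.
by move=> Npsi; rewrite mulr_ge0 ?char1_ge0 ?irr_char ?natr_ge0 ?Cnat_cfdot_char_irr.
Qed.

Lemma index_inertia_cfdot_irr1_le (G H N : {group gT}) (psi : 'CF(G))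
    (t : Iirr N) :
  N <| H -> H \subset G -> psi \is a character ->
  #|H : 'I_H['chi_t]|%:R * '['Res[N] psi, 'chi_t] * 'chi_t 1%g <= psi 1%g.
Proof.
move=> nsNH sHG Npsi; have NpsiN := cfRes_char N Npsi.
rewrite -(cfRes1 N psi) (cfun1_sum_cfdot ('Res[N] psi)).
rewrite (bigID (mem (cfclass_Iirr H t))) /=.
rewrite -[X in X <= _]addr0 lerD ?sumr_ge0 // => [|i _]; last exact: cfdot_irr1_ge0.
rewrite (eq_bigr (fun=> '['Res[N] psi, 'chi_t] * 'chi_t 1%g)).
  by rewrite sumr_const card_cfclass_Iirr // -mulrA mulr_natl.
move=> _ /imsetP[h Hh ->]; rewrite conjg_IirrE cfConjg1.
by rewrite cfdot_Res_conjg // (subsetP sHG).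
Qed.

Lemma char_eq_cfdot_irr (N : {group gT}) (psi : 'CF(N)) (t : Iirr N) :
  psi \is a character -> '[psi, 'chi_t] * 'chi_t 1%g = psi 1%g ->
  psi = '[psi, 'chi_t] *: 'chi_t.
Proof.
move=> Npsi psi1.
have: psi 1%g =
    '[psi, 'chi_t] * 'chi_t 1%g + \sum_(i | i != t) '[psi, 'chi_i] * 'chi_i 1%g.
  by rewrite (cfun1_sum_cfdot psi) (bigD1 t).
rewrite -{1}psi1 -[X in X = _]addr0 => /addrI /esym.
move/(psumr_eq0P (fun i _ => cfdot_irr1_ge0 i Npsi)) => psi_t'.
rewrite {1}(cfun_sum_cfdot psi) (bigD1 t) //= big1 ?addr0 // => i /psi_t' /eqP.
by rewrite mulf_eq0 (negbTE (irr1_neq0 i)) orbF => /eqP->; rewrite scale0r.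
Qed.

End CharacterFacts.

Lemma Sylow_cent_constt_center (gT : finGroupType) (G S : {group gT}) p x :
  p.-Sylow(G) S -> x \in 'C_G(S) -> x.`_p \in 'Z(S).
Proof.
move=> sylS Cx; have nsS : S <| 'N_G(S) by rewrite normal_subnorm (pHall_sub sylS).
have hallS : p.-Hall('N_G(S)) S := pHall_subl (normal_sub nsS) (subsetIl G _) sylS.
have /setIP[Gxp cSxp] : x.`_p \in 'C_G(S) by apply: groupX.
have NSxp : x.`_p \in 'N_G(S) by rewrite inE Gxp (subsetP (cent_sub S)).
by rewrite inE cSxp andbT (mem_normal_Hall hallS nsS NSxp) p_elt_constt.
Qed.

Section SteinbergLike.

Local Open Scope ring_scope.

Variables (gT : finGroupType) (G S : {group gT}) (p : nat) (chi : 'CF(G)).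
Hypotheses (pr_p : prime p) (sylS : p.-Sylow(G) S) (chiSt : steinberg_like S p chi).

Let Nchi : chi \is a character. Proof. by case: chiSt. Qed.
Let chi0 g : g \in G -> (p %| #[g])%N -> chi g = 0.
Proof. by case: chiSt => _ vanish _; apply: vanish. Qed.
Let chi1 : chi 1%g = #|S|%:R. Proof. by case: chiSt. Qed.

Section CoprimeNormalised.

Variable N : {group gT}.
Hypotheses (sNG : N \subset G) (coNp : coprime #|N| p) (nNS : S \subset 'N(N)).

Let H := (N <*> S)%G.
Let sHG : H \subset G. Proof. by rewrite join_subG sNG (pHall_sub sylS). Qed.
Let nsNH : N <| H. Proof. by rewrite normalYl. Qed.
Let pS : p.-group S := pHall_pgroup sylS.
Let p'N : p^'.-group N.
Proof. by rewrite /pgroup p'natE // -prime_coprime // coprime_sym. Qed.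
Let iHN : #|H : N| = #|S|.
Proof.
have tiNS : N :&: S = 1%g by rewrite coprime_TIg // coprime_sym (pnat_coprime pS).
by rewrite -divgS ?normal_sub //= norm_joinEr // TI_cardMg // mulKn.
Qed.
Let hallN : p^'.-Hall(H) N.
Proof. by rewrite /pHall normal_sub // p'N pnatNK iHN. Qed.

Lemma Steinberg_Res_on (T : {group gT}) : T \subset H -> 'Res[T] chi \in 'CF(T, N).
Proof.
move=> sTH; apply/cfun_onP => x xN; have [Tx | /cfun0->] := boolP (x \in T); last by [].
have Hx := subsetP sTH x Tx; rewrite cfResE ?(subset_trans sTH) //.
rewrite chi0 //; first exact: subsetP sHG x Hx.
have := mem_normal_Hall hallN nsNH Hx; rewrite (negbTE xN) /p_elt p'natE //.
by move/esym/negbFE.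
Qed.

Variable t : Iirr N.
Hypothesis Ct : t \in irr_constt ('Res[N] chi).

Let T := ('I_H['chi_t])%G.
Let sNT : N \subset T. Proof. by rewrite subsetI normal_sub // sub_inertia. Qed.
Let sTH : T \subset H := Inertia_sub _ _.

Lemma Steinberg_index_le_cfdot : #|T : N|%:R <= '['Res[N] chi, 'chi_t].
Proof.
have nsNT : N <| T := normalS sNT sTH nsNH.
have pTN : p.-group (T / N).
  apply: pgroupS (quotientS N sTH) _.
  by rewrite /= norm_joinEr // quotientMidl quotient_pgroup.
have coTN : coprime #|T : N| ('o('chi_t)%CF * Num.truncn ('chi_t 1%g)).
  rewrite -card_quotient ?normal_norm //; apply: (pnat_coprime pTN).
  rewrite pnatM; apply/andP; split; apply: pnat_dvd p'N.
    exact: cforder_lin_char_dvdG (cfDet_lin_char _).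
  by have := dvd_irr1_cardG t; rewrite -[in X in X -> _](truncnK (Cnat_irr1 t)) dvdC_nat.
have [c [extc _ _]] :=
  extend_solvable_coprime_irr nsNT (pgroup_sol pTN) (subsetIr _ _) coTN.
rewrite -(cfResRes chi sNT (subset_trans sTH sHG)).
apply: index_le_cfdot_Res_extension extc _ => //; first exact: cfRes_char.
  exact: Steinberg_Res_on.
by rewrite cfResRes // (subset_trans sTH sHG).
Qed.

Lemma Steinberg_constt_lin : 'chi_t \is a linear_char.
Proof.
rewrite qualifE /= irr_char /=; apply/eqP/le_anti/andP; split; last first.
  exact: natC_ge1 (Cnat_irr1 t) (irr1_neq0 t).
have S_gt0 : (0 : algC) < #|S|%:R by rewrite ltr0n cardG_gt0.
rewrite -(ler_pM2l S_gt0) mulr1 -{2}chi1.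
apply: le_trans (index_inertia_cfdot_irr1_le t nsNH sHG Nchi).
rewrite -iHN -(Lagrange_index sTH sNT) natrM ler_wpM2r ?char1_ge0 ?irr_char //.
by rewrite ler_wpM2l ?ler0n ?Steinberg_index_le_cfdot.
Qed.

Lemma Steinberg_Res_stable :
  S \subset 'I['chi_t] -> 'Res[N] chi = #|S|%:R *: 'chi_t.
Proof.
move=> sSI; have eTH : T :=: H by apply/setIidPl; rewrite join_subG sub_inertia.
have t1 : 'chi_t 1%g = 1 by apply/lin_char1/Steinberg_constt_lin.
have mS : '['Res[N] chi, 'chi_t] = #|S|%:R.
  apply/le_anti; rewrite -{2}iHN -eTH Steinberg_index_le_cfdot andbT -chi1.
  have := index_inertia_cfdot_irr1_le t nsNH sHG Nchi.
  by rewrite -/T eTH indexgg mul1r t1 mulr1.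
rewrite -mS; apply: char_eq_cfdot_irr; first exact: cfRes_char.
by rewrite mS t1 mulr1 cfRes1 chi1.
Qed.

End CoprimeNormalised.

Lemma Steinberg_der1_sub_cfker (N : {group gT}) :
  N \subset G -> coprime #|N| p -> S \subset 'N(N) -> (N^`(1))%g \subset cfker chi.
Proof.
move=> sNG coNp nNS.
have: (N^`(1))%g \subset cfker ('Res[N] chi).
  apply: der1_sub_cfker_lin_constt (cfRes_char N Nchi) _ => t.
  exact: Steinberg_constt_lin.
by rewrite cfker_Res // => /subset_trans; apply; apply: subsetIr.
Qed.

Lemma Steinberg_cent_p'_elt y :
  y \in 'C_G(S) -> p^'.-elt y -> y \in 'Z(chi)%CF.
Proof.
case/setIP=> Gy cSy p'y; have sYG : <[y]> \subset G by rewrite cycle_subG.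
have coYp : coprime #|<[y]>| p by rewrite coprime_sym prime_coprime // -p'natE.
have cYS : S \subset 'C(<[y]>) by rewrite centsC cycle_subG.
have nYS : S \subset 'N(<[y]>) := subset_trans cYS (cent_sub _).
have [t Ct] : exists t, t \in irr_constt ('Res[<[y]>] chi).
  apply: neq0_has_constt; rewrite -char1_eq0 ?cfRes_char // cfRes1 chi1.
  by rewrite pnatr_eq0 -lt0n cardG_gt0.
have sSI : S \subset 'I['chi_t].
  apply/subsetP => s Ss; rewrite inE (subsetP nYS) //=; apply/eqP/cfun_inP => z Yz.
  rewrite cfConjgE ?(subsetP nYS) //; congr (_ _); apply/conjg_fixP/commgP.
  by apply/commuteV/commute_sym/(centP (subsetP cYS s Ss)).
have lin_t := Steinberg_constt_lin sYG coYp nYS Ct.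
rewrite char_cfcenterE // -(cfResE chi sYG (cycle_id y)).
rewrite (Steinberg_Res_stable sYG coYp nYS Ct sSI) cfunE normrM.
by rewrite normC_lin_char ?cycle_id // mulr1 chi1 ger0_norm ?ler0n.
Qed.

End SteinbergLike.

Theorem lemma2p3 (gT : finGroupType) (G S N : {group gT}) (p : nat)
  (chi : 'CF(G)) :
  prime p ->
  S \in 'Syl_p(G) ->
  N \subset G ->
  coprime #|N| p ->
  S \subset 'N(N) ->
  steinberg_like S p chi ->
  cfaithful chi ->
  abelian N /\ 'C_G(S) = 'Z(G) * 'Z(S).
Proof.
move=> pr_p; rewrite inE => sylS sNG coNp nNS chiSt ffchi; split.
  apply/derG1P/trivgP/(subset_trans _ ffchi).
  exact (Steinberg_der1_sub_cfker pr_p sylS chiSt sNG coNp nNS).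
have sSG := pHall_sub sylS; apply/eqP; rewrite eqEsubset.
rewrite mul_subG ?(setIS G (centS sSG)) ?(setSI _ sSG) // andbT.
apply/subsetP => x Cx; rewrite -(consttC p^' x) consttNK.
rewrite mem_mulg ?(Sylow_cent_constt_center sylS Cx) //.
have Cx' : x.`_p^' \in 'C_G(S) by apply: groupX.
apply: (subsetP (cfcenter_fful_sub ffchi)).
exact (Steinberg_cent_p'_elt pr_p sylS chiSt Cx' (p_elt_constt _ _)).
Qed.
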